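(* Let $\mathbb{E}$ be a finite-dimensional Euclidean space, $\mathcal{K}\subseteq\mathbb{E}$ a closed convex cone, $\mathcal{A}:\mathbb{E}\to\mathbb{R}^m$ a surjective linear map and $b\in\mathbb{R}^m$, and let $\mathcal{F}=\{x\in\mathcal{K}:\mathcal{A}x=b\}\neq\emptyset$. Suppose strict feasibility fails for $\mathcal{F}$. Let $\{y^i\}_{i=1}^k$ be the vectors obtained by a facial reduction process applied to $\mathcal{F}$, let $\bar{\mathcal{K}}=\mathcal{K}\cap\bigcap_{i=1}^k(\mathcal{A}^*y^i)^\perp$ and $\bar{\mathbb{E}}=\operatorname{span}(\bar{\mathcal{K}})$. Then the restriction $\bar{\mathcal{A}}:\bar{\mathbb{E}}\to\mathbb{R}^m$ of $\mathcal{A}$ to $\bar{\mathbb{E}}$ is not surjective. In other words, the equality constraint system in $\{x\in\bar{\mathcal{K}}:\mathcal{A}x=b\}$ contains redundant constraints.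
   Context: Strict feasibility of $\{x\in C:\mathcal{A}x=b\}$ with respect to a closed convex cone $C$ means that this set contains a point of $\operatorname{relint}(C)$. For a cone $C$, $C^*=\{z:\langle z,x\rangle\ge0\ \forall x\in C\}$ is the dual cone and $C^\perp$ its orthogonal complement; $v^\perp=\{v\}^\perp$. Facial reduction process: set $\mathcal{K}^0=\mathcal{K}$, $\mathcal{F}^0=\mathcal{F}$, $k=0$; while strict feasibility fails for $\mathcal{F}^k=\{x\in\mathcal{K}^k:\mathcal{A}x=b\}$ with respect to $\mathcal{K}^k$, increase $k$ by one, choose $y^k\in\mathbb{R}^m$ with $\mathcal{A}^*y^k\in(\mathcal{K}^{k-1})^*\setminus(\mathcal{K}^{k-1})^\perp$ and $\langle b,y^k\rangle=0$, and set $\mathcal{K}^k=\mathcal{K}^{k-1}\cap(\mathcal{A}^*y^k)^\perp$. (Such $y^k$ exists whenever strict feasibility fails.) The process returns the vectors $y^1,\dots,y^k$ at termination. *)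

From HB Require Import structures.
From mathcomp Require Import all_boot all_order all_algebra.
From mathcomp Require Import all_classical all_reals all_analysis.
Set Implicit Arguments. Unset Strict Implicit. Unset Printing Implicit Defensive.
Import Order.TTheory GRing.Theory Num.Theory.
Import numFieldNormedType.Exports.
Local Open Scope classical_set_scope.
Local Open Scope ring_scope.

(* Euclidean space E = R^n realised as row vectors 'rV[R]_n with the
   standard inner product; a linear map A : E -> R^m is the matrix
   A : 'M_(n,m) acting by x |-> x *m A; its adjoint is y |-> y *m A^T. *)

Section FR.
Variables (R : realType) (n m : nat).

Definition inner (k : nat) (z x : 'rV[R]_k) : R := \sum_(i < k) z 0 i * x 0 i.

Definition linmap (A : 'M[R]_(n, m)) (x : 'rV[R]_n) : 'rV[R]_m := x *m A.
Definition adjoint (A : 'M[R]_(n, m)) (y : 'rV[R]_m) : 'rV[R]_n := y *m A^T.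

Definition is_convex (C : set 'rV[R]_n) : Prop :=
  forall x y t, C x -> C y -> 0 <= t <= 1 -> C (t *: x + (1 - t) *: y).

Definition is_cone (C : set 'rV[R]_n) : Prop :=
  forall x t, C x -> 0 <= t -> C (t *: x).

Definition is_closed_convex_cone (C : set 'rV[R]_n) : Prop :=
  [/\ closed C, is_convex C & is_cone C].

Definition lin_span (S : set 'rV[R]_n) : set 'rV[R]_n :=
  [set x | exists s : seq (R * 'rV[R]_n),
     (forall p, p \in s -> S p.2) /\ x = \sum_(p <- s) p.1 *: p.2].

Definition aff (S : set 'rV[R]_n) : set 'rV[R]_n :=
  [set x | exists s : seq (R * 'rV[R]_n),
     [/\ (forall p, p \in s -> S p.2), \sum_(p <- s) p.1 = 1
       & x = \sum_(p <- s) p.1 *: p.2]].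

Definition relint (C : set 'rV[R]_n) : set 'rV[R]_n :=
  [set x | C x /\ exists2 e : R, 0 < e & ball x e `&` aff C `<=` C].

Definition dual_cone (C : set 'rV[R]_n) : set 'rV[R]_n :=
  [set z | forall x, C x -> 0 <= inner z x].

Definition orth (C : set 'rV[R]_n) : set 'rV[R]_n :=
  [set z | forall x, C x -> inner z x = 0].

Definition strictly_feasible (C : set 'rV[R]_n) (A : 'M[R]_(n, m))
  (b : 'rV[R]_m) : Prop :=
  exists x, relint C x /\ linmap A x = b.

Definition reduced_cone (K : set 'rV[R]_n) (A : 'M[R]_(n, m))
  (ys : seq 'rV[R]_m) : set 'rV[R]_n :=
  [set x | K x /\ forall y, y \in ys -> inner (adjoint A y) x = 0].

(* ys = [:: y^1; ...; y^k] is the output of a (terminated) facial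
   reduction process applied to {x in K : A x = b}: at each step i the
   current problem is not strictly feasible and y^i is a valid reducing
   certificate; at termination the final problem is strictly feasible. *)
Definition facial_reduction_output (K : set 'rV[R]_n) (A : 'M[R]_(n, m))
  (b : 'rV[R]_m) (ys : seq 'rV[R]_m) : Prop :=
  (forall i, (i < size ys)%N ->
     let Kprev := reduced_cone K A (take i ys) in
     let yi := nth 0 ys i in
     [/\ ~ strictly_feasible Kprev A b,
         dual_cone Kprev (adjoint A yi),
         ~ orth Kprev (adjoint A yi)
       & inner b yi = 0])
  /\ strictly_feasible (reduced_cone K A ys) A b.

End FR.

From HB Require Import structures.
From mathcomp Require Import all_boot all_order all_algebra.
From mathcomp Require Import all_classical all_reals all_analysis.
Import Order.TTheory GRing.Theory Num.Theory.
Local Open Scope classical_set_scope.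
Local Open Scope ring_scope.

(* The first certificate y^1 of a nonempty facial reduction sequence has
   A^* y^1 orthogonal to the reduced cone, hence to its span E-bar.  If A
   mapped E-bar onto R^m, some x in E-bar would satisfy A x = y^1, and then
   |y^1|^2 = <y^1, A x> = <A^* y^1, x> = 0, so A^* y^1 = 0 lies in the
   orthogonal complement of the cone, contradicting the choice of y^1.  An
   empty sequence is impossible since K itself is not strictly feasible. *)

Section Inner.
Context {R : realType}.

Lemma inner_mxE k (z x : 'rV[R]_k) : inner z x = (z *m x^T) 0 0.
Proof. by rewrite /inner mxE; apply: eq_bigr => i _; rewrite mxE. Qed.

Lemma inner0l k (x : 'rV[R]_k) : inner 0 x = 0.
Proof. by rewrite inner_mxE mul0mx mxE. Qed.

Lemma inner_sumr k (z : 'rV[R]_k) (s : seq (R * 'rV[R]_k)) :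
  inner z (\sum_(p <- s) p.1 *: p.2) = \sum_(p <- s) p.1 * inner z p.2.
Proof.
rewrite inner_mxE raddf_sum /= mulmx_sumr summxE.
by apply: eq_bigr => p _; rewrite linearZ /= -scalemxAr mxE inner_mxE.
Qed.

Lemma inner_self_eq0 k (y : 'rV[R]_k) : inner y y = 0 -> y = 0.
Proof.
move=> /psumr_eq0P yy0; apply/rowP => i; rewrite mxE.
have /eqP := yy0 (fun j _ => sqr_ge0 (y 0 j)) i isT.
by rewrite mulf_eq0 orbb => /eqP.
Qed.

Lemma inner_adjoint n m (A : 'M[R]_(n, m)) y x :
  inner (adjoint A y) x = inner y (linmap A x).
Proof. by rewrite !inner_mxE /adjoint /linmap trmx_mul mulmxA. Qed.

Lemma adjoint0 n m (A : 'M[R]_(n, m)) : adjoint A 0 = 0.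
Proof. exact: mul0mx. Qed.

End Inner.

Section Orthogonality.
Context {R : realType} {n m : nat}.
Implicit Types (S : set 'rV[R]_n) (A : 'M[R]_(n, m)).

Lemma orth0 S : orth S 0.
Proof. by move=> x _; exact: inner0l. Qed.

Lemma orth_lin_span S z : orth S z -> orth (lin_span S) z.
Proof.
move=> zS _ [s [sS ->]]; rewrite inner_sumr big_seq big1 // => p ps.
by rewrite zS ?mulr0 //; exact: sS.
Qed.

Lemma orth_adjoint_onto_eq0 {S A y} :
  orth S (adjoint A y) -> (exists2 x, lin_span S x & linmap A x = y) -> y = 0.
Proof.
move=> /orth_lin_span Ay_orth [x Sx Axy]; apply: inner_self_eq0.
by rewrite -[in X in inner _ X]Axy -inner_adjoint; exact: Ay_orth.
Qed.

Lemma reduced_cone_nil (K : set 'rV[R]_n) A : reduced_cone K A [::] = K.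
Proof. by rewrite eqEsubset; split=> [x []//|x Kx]; split. Qed.

Lemma orth_reduced_cone (K : set 'rV[R]_n) A ys y :
  y \in ys -> orth (reduced_cone K A ys) (adjoint A y).
Proof. by move=> ys_y x [_]; apply. Qed.

End Orthogonality.

Theorem theorem3p5 (R : realType) (n m : nat) (K : set 'rV[R]_n)
  (A : 'M[R]_(n, m)) (b : 'rV[R]_m) (ys : seq 'rV[R]_m) :
  is_closed_convex_cone K ->
  (forall c : 'rV[R]_m, exists x, linmap A x = c) ->
  (exists x, K x /\ linmap A x = b) ->
  ~ strictly_feasible K A b ->
  facial_reduction_output K A b ys ->
  ~ (forall c : 'rV[R]_m,
       exists x, lin_span (reduced_cone K A ys) x /\ linmap A x = c).
Proof.
move=> _ _ _ K_not_sf [steps final_sf] onto.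
case: ys steps final_sf onto => [|y ys] steps final_sf onto.
  by apply: K_not_sf; move: final_sf; rewrite reduced_cone_nil.
have [_ _ Ay_not_orth _] := steps 0%N isT.
have Ay_orth : orth (reduced_cone K A (y :: ys)) (adjoint A y).
  by apply: orth_reduced_cone; exact: mem_head.
have y0 : y = 0.
  apply: (orth_adjoint_onto_eq0 Ay_orth).
  by have [x [span_x Axy]] := onto y; exists x.
by apply: Ay_not_orth; rewrite y0 adjoint0; exact: orth0.
Qed.
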